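(* Let $\mathbf C$ be a clone $\tau$-algebra. Then: (i) $\mathrm{Fi}\,\mathbf C$ is a subalgebra of $\mathbf C$; (ii) for each $k$, $\mathrm{Fi}_k\,\mathbf C$ is a subuniverse of the $\tau$-reduct $\mathbf C_\tau$, closed under all operations $q_n$ ($n\ge0$), and containing $\mathsf e_1,\dots,\mathsf e_k$; (iii) if $a\in\mathrm{Fi}_0\,\mathbf C$ and $b_1,\dots,b_n\in C$, then $q_n(a,b_1,\dots,b_n)=a$; (iv) if $a\in\mathrm{Fi}\,\mathbf C$, $n\ge\gamma(a)$ and $b_1,\dots,b_n\in\mathrm{Fi}_0\,\mathbf C$, then $q_n(a,b_1,\dots,b_n)\in\mathrm{Fi}_0\,\mathbf C$.
   Context: A clone $\tau$-algebra is an algebra $\mathbf C=(C,\sigma^{\mathbf C}\ (\sigma\in\tau),q_n^{\mathbf C}\ (n\ge0),\mathsf e_i^{\mathbf C}\ (i\ge1))$ with $\mathsf e_i$ nullary, $q_n$ of arity $n+1$, satisfying: (C1) $q_n(\mathsf e_i,x_1,\dots,x_n)=x_i$ ($1\le i\le n$); (C2) $q_n(\mathsf e_j,x_1,\dots,x_n)=\mathsf e_j$ ($j>n$); (C3) $q_n(x,\mathsf e_1,\dots,\mathsf e_n)=x$; (C4) $q_k(x,y_1,\dots,y_k)=q_n(x,y_1,\dots,y_k,\mathsf e_{k+1},\dots,\mathsf e_n)$ ($n>k$); (C5) $q_n(q_n(x,\mathbf y),\mathbf z)=q_n(x,q_n(y_1,\mathbf z),\dots,q_n(y_n,\mathbf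 z))$; (C6) $q_n(\sigma(x_1,\dots,x_k),\mathbf y)=\sigma(q_n(x_1,\mathbf y),\dots,q_n(x_k,\mathbf y))$ for $\sigma\in\tau$ of arity $k$. An element $a$ is independent of $\mathsf e_n$ if $q_n(a,\mathsf e_1,\dots,\mathsf e_{n-1},\mathsf e_{n+1})=a$, dependent otherwise; $\gamma(a)$ is $\omega$ if $a$ depends on infinitely many $\mathsf e_i$, $0$ if on none, otherwise the largest $i$ with $a$ dependent on $\mathsf e_i$. $\mathrm{Fi}_k\,\mathbf C=\{a\in C:\gamma(a)\le k\}$ and $\mathrm{Fi}\,\mathbf C=\bigcup_{k<\omega}\mathrm{Fi}_k\,\mathbf C$. *)

From mathcomp Require Import all_boot.
Set Implicit Arguments. Unset Strict Implicit. Unset Printing Implicit Defensive.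

(* A clone tau-algebra on carrier [C] consists of
     sig s : ('I_(ar s) -> C) -> C             (the operation sigma^C, arity ar s)
     q n   : C -> ('I_n -> C) -> C             (q_n, arity n+1; the 'I_n-argument
                                               lists y_1,...,y_n, y_{i+1} at index i)
     e     : nat -> C                          (e i = the constant e_i, meaningful for i >= 1;
                                               e 0 is an unused junk value) *)

Section CloneAlg.
Variables (tau : Type) (ar : tau -> nat) (C : Type).
Variable sig : forall s : tau, ('I_(ar s) -> C) -> C.
Variable q : forall n : nat, C -> ('I_n -> C) -> C.
Variable e : nat -> C.

(* q_n with a 1-indexed argument list y : nat -> C, i.e. q_n(x, y 1, ..., y n). *)
Definition qn (n : nat) (x : C) (y : nat -> C) : C :=
  @q n x (fun i : 'I_n => y i.+1).

Definition is_clone_alg : Prop :=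
  (forall n i (x : nat -> C), 1 <= i <= n -> qn n (e i) x = x i) /\
  (forall n j (x : nat -> C), n < j -> qn n (e j) x = e j) /\
  (forall n x, qn n x e = x) /\
  (forall k n x (y : nat -> C), k < n ->
                qn k x y = qn n x (fun i => if i <= k then y i else e i)) /\
  (forall n x (y z : nat -> C),
                qn n (qn n x y) z = qn n x (fun i => qn n (y i) z)) /\
  (forall n (s : tau) (x : 'I_(ar s) -> C) (y : nat -> C),
                qn n (sig x) y = sig (fun j => qn n (x j) y)).

(* a is independent of e_n (n >= 1): q_n(a, e_1, ..., e_{n-1}, e_{n+1}) = a. *)
Definition independent (a : C) (n : nat) : Prop :=
  @q n a (fun i : 'I_n => if i.+1 < n then e i.+1 else e n.+1) = a.

Definition dependent (a : C) (n : nat) : Prop := ~ independent a n.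

(* gamma(a) <= k  (k a natural number), written out: a is dependent on no e_n
   with n > k.  (If gamma(a) = omega, a depends on some e_n with n > k;
   if gamma(a) is finite it is the largest dependent index.) *)
Definition gamma_le (a : C) (k : nat) : Prop :=
  forall n, k < n -> ~ dependent a n.

Definition Fi_k (k : nat) (a : C) : Prop := gamma_le a k.
Definition Fi (a : C) : Prop := exists k, Fi_k k a.

Definition tau_closed (P : C -> Prop) : Prop :=
  forall (s : tau) (x : 'I_(ar s) -> C), (forall j, P (x j)) -> P (sig x).

Definition q_closed (P : C -> Prop) : Prop :=
  forall n x (y : 'I_n -> C), P x -> (forall i, P (y i)) -> P (@q n x y).

Definition is_subalgebra (P : C -> Prop) : Prop :=
  tau_closed P /\ q_closed P /\ (forall i, 1 <= i -> P (e i)).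

End CloneAlg.

(* If a is independent of e_j, then a = q_N(a, e_1, .., e_{j-1}, e_{j+1},
   e_{j+1}, .., e_N), so by (C5) q_N(a, w) equals q_N(a, w') for a w' that no
   longer reads w_j; hence an element with gamma(a) <= k ignores all its
   arguments beyond the k-th.  For closure of Fi_k under q_m, pad q_m and the
   independence test q_n (n > k) to a common arity with (C4); (C5) pushes the
   substitution e_n -> e_{n+1} into the arguments, which lie in Fi_k and are
   therefore fixed by it, and only the first gamma(x) of them matter.  Fi is
   the union of the increasing chain of the Fi_k, and operations are finitary. *)

From Stdlib Require Import Classical_Prop FunctionalExtensionality.
From Pilot Require Import Defs.
From mathcomp Require Import all_boot.
Set Implicit Arguments. Unset Strict Implicit.

Section CloneAlgebra.
Variables (tau : Type) (ar : tau -> nat) (C : Type).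
Variable sig : forall s : tau, ('I_(ar s) -> C) -> C.
Variable q : forall n : nat, C -> ('I_n -> C) -> C.
Variable e : nat -> C.
Hypothesis HC : is_clone_alg sig q e.

Local Notation qn := (qn q).
Local Notation Fi_k := (Fi_k q e).
Local Notation Fi := (Fi q e).

Lemma qn_ext N a (y z : nat -> C) :
  (forall i, 0 < i <= N -> y i = z i) -> qn N a y = qn N a z.
Proof.
move=> yz; rewrite /Defs.qn; congr (q _); apply: functional_extensionality => i.
by apply: yz; rewrite /= ltn_ord.
Qed.

Lemma qn_e N i (y : nat -> C) :
  0 < i -> qn N (e i) y = if i <= N then y i else e i.
Proof.
case: HC => C1 [C2 _] i_gt0; case: leqP => [iN | Ni]; last exact: C2.
by apply: C1; rewrite i_gt0.
Qed.

Lemma qn_id N a : qn N a e = a.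
Proof. by case: HC => _ [_ [C3 _]]. Qed.

Lemma qn_comp N a (y z : nat -> C) :
  qn N (qn N a y) z = qn N a (fun i => qn N (y i) z).
Proof. by case: HC => _ [_ [_ [_ [C5 _]]]]. Qed.

Lemma qn_sig N s (x : 'I_(ar s) -> C) (y : nat -> C) :
  qn N (sig x) y = sig (fun j => qn N (x j) y).
Proof. by case: HC => _ [_ [_ [_ [_ C6]]]]. Qed.

Lemma qn_widen {n N a} {y : nat -> C} :
  n <= N -> (forall i, n < i -> y i = e i) -> qn n a y = qn N a y.
Proof.
case: HC => _ [_ [_ [C4 _]]]; rewrite leq_eqVlt => /predU1P[-> // | nN] ye.
rewrite (C4 _ _ _ _ nN); apply: qn_ext => i _.
by case: leqP => // ni; rewrite ye.
Qed.

(* [args y] lists y_1, ..., y_n at positions 1..n, padded with the e_i. *)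
Definition args n (y : 'I_n -> C) (i : nat) : C :=
  if i is j.+1 then oapp y (e i) (insub j) else e 0.

Lemma q_args n a (y : 'I_n -> C) : q a y = qn n a (args y).
Proof.
rewrite /Defs.qn /args; congr (q _); apply: functional_extensionality => i.
by rewrite valK.
Qed.

Lemma args_out n (y : 'I_n -> C) i : n < i -> args y i = e i.
Proof. by case: i => // i ni /=; rewrite insubN // -leqNgt. Qed.

Definition skip_e n (i : nat) : C := if i == n then e n.+1 else e i.

Lemma independentE a n : independent q e a n <-> qn n a (skip_e n) = a.
Proof.
suff -> : qn n a (skip_e n) =
    qn n a (fun i => if i < n then e i else e n.+1) by [].
apply: qn_ext => i /andP[_]; rewrite /skip_e leq_eqVlt.
by case: eqP => [-> | _] /=; [rewrite ltnn | move=> ->].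
Qed.

Lemma independent_qn a n N : independent q e a n -> n <= N ->
  qn N a (skip_e n) = a.
Proof.
move=> /independentE a_indep nN; rewrite -(qn_widen nN) // => i ni.
by rewrite /skip_e gtn_eqF.
Qed.

Lemma independent_of_gamma_le a k n : gamma_le q e a k -> k < n ->
  independent q e a n.
Proof. by move=> a_k kn; apply: NNPP; apply: a_k. Qed.

Lemma qn_independent_arg {a j N} {y z : nat -> C} : independent q e a j ->
  (forall i, i != j -> y i = z i) -> qn N a y = qn N a z.
Proof.
move=> a_indep yz; have [jN | Nj] := leqP j N; last first.
  by apply: qn_ext => i /andP[_ iN]; apply: yz; rewrite ltn_eqF ?(leq_ltn_trans iN).
have substE w : qn N a w = qn N a (fun i => qn N (skip_e j i) w).
  by rewrite -qn_comp independent_qn.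
rewrite substE [RHS]substE; apply: qn_ext => i /andP[i_gt0 _].
rewrite /skip_e; case: eqP => [_ | /eqP ij]; rewrite !qn_e //.
  by case: ifP => // _; apply: yz; rewrite gtn_eqF.
by case: ifP => // _; apply: yz.
Qed.

Lemma qn_gamma_le {a k N} {y z : nat -> C} : gamma_le q e a k ->
  (forall i, 0 < i <= k -> y i = z i) -> qn N a y = qn N a z.
Proof.
move=> a_k; pose P m := forall y z : nat -> C,
  (forall i, 0 < i <= m -> y i = z i) -> qn N a y = qn N a z.
have step m : k <= m -> P m.+1 -> P m.
  move=> km Pm1 {}y {}z yz; pose w i := if i == m.+1 then z i else y i.
  have a_indep := independent_of_gamma_le a_k (km : k < m.+1).
  rewrite (qn_independent_arg (z := w) a_indep) => [|i /negPf]; last first.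
    by rewrite /w => ->.
  apply: Pm1 => i /andP[i_gt0]; rewrite /w leq_eqVlt ltnS.
  by case: eqP => //= _ im; apply: yz; rewrite i_gt0.
suff down d : P (k + d) -> P k.
  apply: (down N) => {}y {}z yz; apply: qn_ext => i /andP[i_gt0 iN].
  by apply: yz; rewrite i_gt0 (leq_trans iN) ?leq_addl.
elim: d => [|d IHd]; first by rewrite addn0.
by rewrite addnS => /step -/(_ (leq_addr _ _)); apply: IHd.
Qed.

Lemma qn_Fi_k0 a N (y : nat -> C) : Fi_k 0 a -> qn N a y = a.
Proof.
move=> a_0; rewrite -[RHS](qn_id N); apply: (qn_gamma_le a_0) => i.
by rewrite ltnNge => /andP[/negPf ->].
Qed.

Lemma Fi_k_mono k l a : k <= l -> Fi_k k a -> Fi_k l a.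
Proof. by move=> kl a_k n ln; apply: a_k; apply: leq_ltn_trans ln. Qed.

Lemma Fi_k_e k i : 0 < i <= k -> Fi_k k (e i).
Proof.
case/andP=> i_gt0 ik n kn; apply; apply/independentE.
have i_lt_n : i < n := leq_ltn_trans ik kn.
by rewrite qn_e // ltnW // /skip_e ltn_eqF.
Qed.

Lemma Fi_k_sig k : tau_closed sig (Fi_k k).
Proof.
move=> s x x_k n kn; apply; apply/independentE.
rewrite qn_sig; congr sig; apply: functional_extensionality => j.
exact/independentE/(independent_of_gamma_le (x_k j)).
Qed.

Lemma args_Fi_k k m (y : 'I_m -> C) i : (forall j, Fi_k k (y j)) ->
  0 < i <= maxn m k -> Fi_k k (args y i).
Proof.
move=> y_k /andP[i_gt0]; have [mi | im] := ltnP m i.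
  by rewrite args_out // leq_max leqNgt mi => ik; apply: Fi_k_e; rewrite i_gt0.
case: i i_gt0 im => // i _ im _ /=.
by case: insubP => [o _ _ | ]; [apply: y_k | rewrite im].
Qed.

(* The padding e_i, m < i <= l, read by x must lie in Fi_k. *)
Lemma Fi_k_q k l m x (y : 'I_m -> C) : Fi_k l x -> l <= maxn m k ->
  (forall j, Fi_k k (y j)) -> Fi_k k (q x y).
Proof.
move=> x_l lmk y_k n kn; apply; apply/independentE.
have [mM nM] : m <= maxn m n /\ n <= maxn m n by rewrite leq_maxl leq_maxr.
rewrite q_args (qn_widen mM) ?(qn_widen nM) => [||i]; last exact: args_out.
  rewrite qn_comp; apply: (qn_gamma_le x_l) => i /andP[i_gt0 il].
  apply: independent_qn nM; apply: independent_of_gamma_le kn.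
  by apply: args_Fi_k; rewrite // i_gt0 (leq_trans il).
by move=> i ni; rewrite /skip_e gtn_eqF.
Qed.

Lemma Fi_family_bound m (x : 'I_m -> C) : (forall j, Fi (x j)) ->
  exists k, forall j, Fi_k k (x j).
Proof.
move=> /fin_all_exists[f x_f]; exists (\max_j f j) => j.
exact: Fi_k_mono (leq_bigmax j) (x_f j).
Qed.

Lemma Fi_subalgebra : is_subalgebra sig q e Fi.
Proof.
split; [|split].
- move=> s x /Fi_family_bound[k x_k]; exists k; exact: Fi_k_sig.
- move=> m x y [l x_l] /Fi_family_bound[k y_k]; exists (maxn l k).
  apply: (Fi_k_q (l := l)) => [//||j]; first by rewrite leq_max leq_maxl orbT.
  exact: Fi_k_mono (leq_maxr l k) (y_k j).
- by move=> i i_gt0; exists i; apply: Fi_k_e; rewrite i_gt0 leqnn.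
Qed.

End CloneAlgebra.

Theorem proposition4p9 (tau : Type) (ar : tau -> nat) (C : Type)
  (sig : forall s : tau, ('I_(ar s) -> C) -> C)
  (q : forall n : nat, C -> ('I_n -> C) -> C) (e : nat -> C)
  (HC : is_clone_alg sig q e) :
  (* (i) *)
  is_subalgebra sig q e (Fi q e) /\
  (* (ii) *)
  (forall k, tau_closed sig (Fi_k q e k) /\ q_closed q (Fi_k q e k) /\
             (forall i, 1 <= i <= k -> Fi_k q e k (e i))) /\
  (* (iii) *)
  (forall a n (b : 'I_n -> C), Fi_k q e 0 a -> q n a b = a) /\
  (* (iv) *)
  (forall a n (b : 'I_n -> C), Fi q e a -> gamma_le q e a n ->
     (forall i, Fi_k q e 0 (b i)) -> Fi_k q e 0 (q n a b)).
Proof.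
split; [exact: Fi_subalgebra | split; [|split]].
- move=> k; split; first exact: Fi_k_sig.
  split; last by move=> i; apply: (Fi_k_e HC).
  by move=> m x y x_k; apply: (Fi_k_q HC x_k); rewrite leq_maxr.
- by move=> a n b a_0; rewrite (q_args q e) (qn_Fi_k0 HC).
- by move=> a n b _ a_n; apply: (Fi_k_q HC a_n); rewrite leq_maxl.
Qed.
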